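(* Let $n\ge 2$ and let $v_1,\dots,v_N\in S^{n-1}$ be unit vectors that are not contained in any closed hemisphere and are in general position in dimension $n$. Let $(P_i)$ be a sequence of polytopes in $\mathcal P(v_1,\dots,v_N)$. If the outer radii $R_i$ of $P_i$ are not uniformly bounded in $i$, then the inner radii $r_i$ of $P_i$ are not uniformly bounded in $i$ either.
   Context: Unit vectors are in general position in dimension $n$ if any $n$ of them are linearly independent. $\mathcal P(v_1,\dots,v_N)$ is the set of polytopes in $\mathbb R^n$ (with nonempty interior) all of whose facet outer unit normals belong to $\{v_1,\dots,v_N\}$; equivalently sets $\{x: x\cdot v_j\le z_j,\ j=1,\dots,N\}$ with nonempty interior. The outer radius of a convex body is the smallest radius of a Euclidean ball containing it; the inner radius is the largest radius of a Euclidean ball contained in it. *)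

From HB Require Import structures.
From mathcomp Require Import all_boot all_order all_algebra.
From mathcomp Require Import boolp classical_sets reals.
Set Implicit Arguments. Unset Strict Implicit. Unset Printing Implicit Defensive.
Import Order.TTheory GRing.Theory Num.Theory.
Local Open Scope ring_scope.
Local Open Scope classical_set_scope.

Definition dotp (R : realType) (n : nat) (x y : 'I_n -> R) : R :=
  \sum_(i < n) x i * y i.

Definition sqnorm (R : realType) (n : nat) (x : 'I_n -> R) : R := dotp x x.

Definition is_unit_vec (R : realType) (n : nat) (x : 'I_n -> R) : Prop :=
  sqnorm x = 1.

Definition cball (R : realType) (n : nat) (c : 'I_n -> R) (r : R) : set ('I_n -> R) :=
  [set x | sqnorm (fun i => x i - c i) <= r ^+ 2].

Definition not_in_closed_hemisphere (R : realType) (n N : nat) (v : 'I_N -> 'I_n -> R) :=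
  forall u : 'I_n -> R, is_unit_vec u -> exists j : 'I_N, dotp (v j) u < 0.

Definition general_position (R : realType) (n N : nat) (v : 'I_N -> 'I_n -> R) :=
  forall s : 'I_n -> 'I_N, injective s ->
  forall c : 'I_n -> R,
    (forall i : 'I_n, \sum_(k < n) c k * v (s k) i = 0) -> forall k, c k = 0.

Definition has_nonempty_interior (R : realType) (n : nat) (K : set ('I_n -> R)) :=
  exists c : 'I_n -> R, exists r : R, 0 < r /\ cball c r `<=` K.

Definition polyset (R : realType) (n N : nat) (v : 'I_N -> 'I_n -> R) (z : 'I_N -> R)
  : set ('I_n -> R) := [set x | forall j, dotp x (v j) <= z j].

Definition in_Pclass (R : realType) (n N : nat) (v : 'I_N -> 'I_n -> R)
  (K : set ('I_n -> R)) : Prop :=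
  exists z : 'I_N -> R, K = polyset v z /\ has_nonempty_interior K.

Definition outer_radius (R : realType) (n : nat) (K : set ('I_n -> R)) : R :=
  inf [set r : R | 0 <= r /\ exists c, K `<=` cball c r].

Definition inner_radius (R : realType) (n : nat) (K : set ('I_n -> R)) : R :=
  sup [set r : R | 0 <= r /\ exists c, cball c r `<=` K].

From HB Require Import structures.
From mathcomp Require Import all_boot all_order all_algebra.
From mathcomp Require Import boolp classical_sets reals.
From mathcomp Require Import ring lra zify.
Import Order.TTheory GRing.Theory Num.Theory.
Set Implicit Arguments. Unset Strict Implicit. Unset Printing Implicit Defensive.
Local Open Scope ring_scope.
Local Open Scope classical_set_scope.

(* Contrapositive: bounded inner radii force bounded outer radii.  The key
   estimate is that for x, y in a polytope P of the class and any coordinate i,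
   P contains a ball of radius |x_i - y_i| / C with C depending only on v.
   Take the n normals v_s(1), ..., v_s(n) on which |(x - y) . v_j| is smallest:
   by general position they form a basis, so |x_i - y_i| <= C |(x - y) . v_j|
   for every other j, which gives slack to the facets j outside s.  Moving the
   midpoint of x and y along the vector w with w . v_s(k) = -1 creates slack on
   the facets in s.  The hemisphere condition only serves to ensure n <= N;
   unbounded polyhedra have outer radius inf set0 = 0. *)

Lemma ler_sum_term (R : numDomainType) (T : finType) (F : T -> R) t :
  (forall u, 0 <= F u) -> F t <= \sum_u F u.
Proof. by move=> F0; rewrite (bigD1 t) //= lerDl sumr_ge0. Qed.

Lemma exists_min_injection (R : realDomainType) (T : finType) (n : nat) (p : T -> R) :
  (n <= #|T|)%N ->
  exists2 s : {ffun 'I_n -> T}, injective s &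
    forall j, (forall k, s k != j) -> forall k, p (s k) <= p j.
Proof.
move=> hn.
pose s0 : {ffun 'I_n -> T} := [ffun i => enum_val (widen_ord hn i)].
have s0_inj : injectiveb s0.
  by apply/injectiveP => a b; rewrite !ffunE => /enum_val_inj [] /val_inj.
pose F (f : {ffun 'I_n -> T}) := \sum_k p (f k).
have [s /injectiveP s_inj s_min] :=
  arg_minP (P := fun f : {ffun _} => injectiveb f) F s0_inj.
(* Otherwise exchanging s k for the unused j would decrease the minimal sum. *)
exists s => // j j_free k; rewrite leNgt; apply/negP => lt_j.
pose s' : {ffun 'I_n -> T} := [ffun i => if i == k then j else s i].
have s'_inj : injectiveb s'.
  apply/injectiveP => a b; rewrite !ffunE.
  case: eqP => [-> | _]; case: eqP => [-> | _] // e.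
  - by have := j_free b; rewrite e eqxx.
  - by have := j_free a; rewrite -e eqxx.
  - exact: s_inj.
have := s_min s' s'_inj; rewrite /F (bigD1 k) // [X in _ <= X](bigD1 k) //= ffunE eqxx.
rewrite [X in _ <= _ + X](eq_bigr (fun i => p (s i))) => [|i /negbTE ik].
  by rewrite lerD2r leNgt lt_j.
by rewrite ffunE ik.
Qed.

Section Euclid.
Variables (R : realType) (n : nat).
Implicit Types (a b c u x : 'I_n -> R) (r s t : R).

Lemma dotp_comb a b s t c :
  dotp (fun i => s * a i + t * b i) c = s * dotp a c + t * dotp b c.
Proof. by rewrite /dotp !mulr_sumr -big_split /=; apply: eq_bigr => i _; ring. Qed.

Lemma dotpZr a t b : dotp a (fun i => t * b i) = t * dotp a b.
Proof. by rewrite /dotp mulr_sumr; apply: eq_bigr => i _; ring. Qed.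

Lemma sqnorm_ge0 a : 0 <= sqnorm a.
Proof. by apply: sumr_ge0 => i _; rewrite -expr2 sqr_ge0. Qed.

Lemma sqnorm_comb a b s t :
  sqnorm (fun i => s * a i + t * b i)
  = s ^+ 2 * sqnorm a + 2 * s * t * dotp a b + t ^+ 2 * sqnorm b.
Proof.
by rewrite /sqnorm /dotp !mulr_sumr -!big_split /=; apply: eq_bigr => i _; ring.
Qed.

Lemma sqnorm_scale t a : sqnorm (fun i => t * a i) = t ^+ 2 * sqnorm a.
Proof. by rewrite /sqnorm /dotp mulr_sumr; apply: eq_bigr => i _; ring. Qed.

Lemma dotp_le_unit a u r :
  0 <= r -> sqnorm a <= r ^+ 2 -> is_unit_vec u -> dotp a u <= r.
Proof.
move=> r0 ha hu.
have := sqnorm_ge0 (fun i => 1 * a i + - dotp a u * u i).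
rewrite sqnorm_comb hu => h.
have : dotp a u ^+ 2 <= r ^+ 2 by nra.
nra.
Qed.

Lemma cball_chord_le c c' u t r :
  cball c' r (fun i => c i + t * u i) -> cball c' r (fun i => c i + - t * u i) ->
  t ^+ 2 * sqnorm u <= r ^+ 2.
Proof.
rewrite /cball /=.
have shift s : (fun i => c i + s * u i - c' i) = (fun i => 1 * (c i - c' i) + s * u i).
  by apply: funext => i; ring.
rewrite !shift !sqnorm_comb => h1 h2.
have := sqnorm_ge0 (fun i => c i - c' i).
nra.
Qed.

Lemma cball_unit_shift c u t :
  is_unit_vec u -> cball c `|t| (fun i => c i + t * u i).
Proof.
move=> hu; rewrite /cball /=.
have -> : (fun i => c i + t * u i - c i) = (fun i => t * u i).
  by apply: funext => i; ring.
by rewrite sqnorm_scale hu mulr1 real_normK ?num_real.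
Qed.

Lemma cball_sub_polyset N (v : 'I_N -> 'I_n -> R) z c t :
  (forall j, is_unit_vec (v j)) -> 0 <= t ->
  (forall j, dotp c (v j) + t <= z j) -> cball c t `<=` polyset v z.
Proof.
move=> v_unit t0 hc x hx j.
have -> : x = (fun i => 1 * c i + 1 * (x i - c i)) by apply: funext => i; ring.
rewrite dotp_comb !mul1r.
have := dotp_le_unit t0 hx (v_unit j).
have := hc j; lra.
Qed.

Lemma sub_cball_of_coord (K : set ('I_n -> R)) c r :
  0 <= r -> (forall x i, K x -> `|x i - c i| <= r) -> K `<=` cball c (n%:R * r).
Proof.
move=> r0 hK x Kx; rewrite /cball /sqnorm /dotp /=.
apply: (@le_trans _ _ (\sum_(i < n) r ^+ 2)).
  apply: ler_sum => i _; rewrite -expr2 -real_normK ?num_real //.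
  by rewrite lerXn2r ?nnegrE // ?hK.
rewrite sumr_const card_ord -[_ *+ n]mulr_natl exprMn.
apply: ler_wpM2r; first exact: sqr_ge0.
by rewrite -natrX ler_nat; case: n => // m; rewrite expnS leq_pmulr.
Qed.

Lemma exists_orthogonal_vec N (v : 'I_N -> 'I_n -> R) :
  (N < n)%N -> exists2 u, 0 < sqnorm u & forall j, dotp (v j) u = 0.
Proof.
move=> ltNn.
pose V : 'M[R]_(n, N) := \matrix_(i, j) v j i.
have : kermx V != 0.
  by rewrite -mxrank_eq0 mxrank_ker -lt0n; have := rank_leq_col V; lia.
case/eqP/matrixP/existsNP => a /existsNP [b]; rewrite [X in _ <> X]mxE => /eqP hab.
exists (fun i => kermx V a i).
  rewrite /sqnorm /dotp (bigD1 b) //= -expr2 ltr_pwDl ?exprn_even_gt0 ?hab ?orbT //.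
  by apply: sumr_ge0 => i _; rewrite -expr2 sqr_ge0.
move=> j; have := congr1 (fun M : 'M[R]_(n, N) => M a j) (mulmx_ker V).
rewrite !mxE => h; rewrite -[RHS]h /dotp.
by apply: eq_bigr => i _; rewrite [V _ _]mxE mulrC.
Qed.

End Euclid.

Section Radii.
Variables (R : realType) (n : nat).
Implicit Types (K : set ('I_n -> R)) (c u : 'I_n -> R) (r t : R).

Lemma outer_radius_le K c r : 0 <= r -> K `<=` cball c r -> outer_radius K <= r.
Proof. by move=> r0 hK; apply: ge_inf; [exists 0 => s [] | split => //; exists c]. Qed.

Lemma outer_radius_unbounded K :
  (forall c r, ~ K `<=` cball c r) -> outer_radius K = 0.
Proof.
move=> unbounded; rewrite /outer_radius -[RHS](inf0 R); congr inf.
by apply/seteqP; split => // r [_ [c hK]]; apply: (unbounded c r).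
Qed.

(* Boundedness of K is needed: sup returns 0 on sets without upper bound. *)
Lemma le_inner_radius K u c' r' c t :
  is_unit_vec u -> K `<=` cball c' r' -> 0 <= t -> cball c t `<=` K ->
  t <= inner_radius K.
Proof.
move=> hu bounded t0 hc; apply: ub_le_sup; last by split => //; exists c.
exists `|r'| => s [s0 [c1]]; rewrite -[in cball c1 s](ger0_norm s0) => hc1.
have minus := cball_unit_shift c1 (- s) hu; rewrite normrN in minus.
have := cball_chord_le (bounded _ (hc1 _ (cball_unit_shift c1 s hu)))
  (bounded _ (hc1 _ minus)).
rewrite hu mulr1 => hs.
have := normr_ge0 r'; have := real_normK (num_real r'); nra.
Qed.

End Radii.

Lemma not_in_closed_hemisphere_dim (R : realType) (n N : nat)
    (v : 'I_N -> 'I_n -> R) :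
  not_in_closed_hemisphere v -> (n <= N)%N.
Proof.
move=> hemi; rewrite leqNgt; apply/negP => /(exists_orthogonal_vec v) [u u_pos u_orth].
have unit : is_unit_vec (fun i => (Num.sqrt (sqnorm u))^-1 * u i).
  by rewrite /is_unit_vec sqnorm_scale exprVn sqr_sqrtr ?mulVf ?gt_eqF // ltW.
have [j] := hemi _ unit.
by rewrite dotpZr u_orth mulr0 ltxx.
Qed.

Section Frames.
Variables (R : realType) (n N : nat) (v : 'I_N -> 'I_n -> R).
Hypothesis gp : general_position v.
Implicit Types (s : {ffun 'I_n -> 'I_N}) (a d : 'I_n -> R).

Definition frame_mx s : 'M[R]_n := \matrix_(k, i) v (s k) i.

Definition frame_solve s a : 'I_n -> R :=
  fun i => (\row_k a k *m invmx (frame_mx s)^T) 0 i.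

Definition frame_norm s : R := \sum_k \sum_i `|invmx (frame_mx s)^T k i|.

Lemma frame_norm_ge0 s : 0 <= frame_norm s.
Proof. by apply: sumr_ge0 => k _; exact: sumr_ge0. Qed.

Lemma frame_mx_unit s : injective s -> (frame_mx s)^T \in unitmx.
Proof.
move=> s_inj; rewrite unitmx_tr unitmxE unitfE; apply/negP => /det0P [w w_neq0 hw].
case/eqP: w_neq0; apply/matrixP => a k; rewrite [RHS]mxE.
apply: (@gp s s_inj (fun k => w a k)) => i.
have := congr1 (fun M : 'rV[R]_n => M a i) hw; rewrite !mxE => h.
by rewrite -[RHS]h; apply: eq_bigr => k' _; rewrite mxE.
Qed.

Lemma dotp_frame_solve s a k :
  injective s -> dotp (frame_solve s a) (v (s k)) = a k.
Proof.
move=> s_inj.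
have := congr1 (fun M : 'rV[R]_n => M 0 k) (mulmxKV (frame_mx_unit s_inj) (\row_k a k)).
rewrite !mxE => h; rewrite -[RHS]h.
by rewrite /dotp; apply: eq_bigr => i _; rewrite /frame_solve !mxE.
Qed.

Lemma frame_solve_dotp s d :
  injective s -> frame_solve s (fun k => dotp d (v (s k))) = d.
Proof.
move=> s_inj; apply: funext => i.
have := congr1 (fun M : 'rV[R]_n => M 0 i) (mulmxK (frame_mx_unit s_inj) (\row_k d k)).
rewrite mxE => h; rewrite -[RHS]h /frame_solve !mxE; apply: eq_bigr => k _.
by rewrite !mxE; congr (_ * _); apply: eq_bigr => j _; rewrite !mxE.
Qed.

Lemma frame_solve_bound s a i :
  `|frame_solve s a i| <= frame_norm s * \sum_k `|a k|.
Proof.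
rewrite /frame_solve mxE mulr_sumr; apply: le_trans (ler_norm_sum _ _ _) _.
apply: ler_sum => k _; rewrite mxE normrM mulrC; apply: ler_wpM2r => //.
rewrite /frame_norm.
apply: le_trans (ler_sum_term (F := fun j => `|invmx (frame_mx s)^T k j|) i _) _ => //.
apply: (ler_sum_term (F := fun k => \sum_j `|invmx (frame_mx s)^T k j|)) => k'.
exact: sumr_ge0.
Qed.

Lemma coord_le_frame s d i :
  injective s -> `|d i| <= frame_norm s * \sum_k `|dotp d (v (s k))|.
Proof.
by move=> s_inj; rewrite -{1}(frame_solve_dotp d s_inj); exact: frame_solve_bound.
Qed.

End Frames.

Section InscribedBall.
Variables (R : realType) (n N : nat) (v : 'I_N -> 'I_n -> R).
Hypotheses (v_unit : forall j, is_unit_vec (v j)) (gp : general_position v).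
Hypothesis le_nN : (n <= N)%N.

Lemma frame_constant : exists2 C : R, 1 <= C & forall s j,
  n%:R * frame_norm v s <= C /\ `|dotp (frame_solve v s (fun=> -1)) (v j)| + 1 <= C.
Proof.
pose W s j := `|dotp (frame_solve v s (fun=> -1)) (v j)|.
pose A := \sum_s n%:R * frame_norm v s.
pose B := \sum_s \sum_j W s j.
have A_ge0 s : 0 <= n%:R * frame_norm v s.
  exact: mulr_ge0 (ler0n _ _) (frame_norm_ge0 _ _).
have B_ge0 s : 0 <= \sum_j W s j by apply: sumr_ge0 => j _; exact: normr_ge0.
have A0 : 0 <= A by apply: sumr_ge0 => s _.
have B0 : 0 <= B by apply: sumr_ge0 => s _.
exists (1 + A + B) => [|s j]; first lra.
have hA := ler_sum_term (F := fun s => n%:R * frame_norm v s) s A_ge0.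
have hB := ler_sum_term (F := fun s => \sum_j W s j) s B_ge0.
have hBj := ler_sum_term (F := W s) j (fun _ => normr_ge0 _).
rewrite -/A -/B /= in hA hB; rewrite -/(W s j); split; lra.
Qed.

Lemma polyset_inscribed_ball : exists2 C : R, 0 < C & forall z x y i,
  polyset v z x -> polyset v z y ->
  exists c, cball c (`|x i - y i| / C) `<=` polyset v z.
Proof.
have [C0 C0_ge1 hC0] := frame_constant.
have C_gt0 : 0 < 4 * C0 ^+ 2 by rewrite mulr_gt0 // exprn_gt0 // (lt_le_trans ltr01).
exists (4 * C0 ^+ 2) => // z x y i hx hy.
pose d k := 1 * x k + -1 * y k.
have le_n_card : (n <= #|'I_N|)%N by rewrite card_ord.
have [s s_inj s_min] := exists_min_injection (fun j => `|dotp d (v j)|) le_n_card.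
pose t := `|x i - y i| / (4 * C0 ^+ 2).
have t0 : 0 <= t by rewrite divr_ge0 // ltW.
have tC : t * (4 * C0 ^+ 2) = `|x i - y i| by rewrite divfK ?gt_eqF.
exists (fun k => 1 * ((1/2) * x k + (1/2) * y k) + t * frame_solve v s (fun=> -1) k).
apply: cball_sub_polyset => // j; rewrite !dotp_comb !mul1r -/t.
have [[k <-] | j_free] := pselect (exists k, s k = j).
  by rewrite dotp_frame_solve //; have := hx (s k); have := hy (s k); lra.
have [hL hW] := hC0 s j.
have hd : `|x i - y i| <= C0 * `|dotp x (v j) - dotp y (v j)|.
  have -> : dotp x (v j) - dotp y (v j) = dotp d (v j) by rewrite dotp_comb; ring.
  have -> : x i - y i = d i by rewrite /d; ring.
  apply: le_trans (coord_le_frame gp d i s_inj) _.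
  have free k : s k != j by apply/eqP => e; apply: j_free; exists k.
  have hsum : \sum_k `|dotp d (v (s k))| <= n%:R * `|dotp d (v j)|.
    apply: le_trans (ler_sum _ (fun k _ => s_min j free k)) _.
    by rewrite sumr_const card_ord mulr_natl.
  apply: le_trans (ler_wpM2l (frame_norm_ge0 v s) hsum) _.
  by rewrite mulrA [_ * n%:R]mulrC ler_wpM2r.
move: (hx j) (hy j) hW hd; rewrite -tC.
set X := dotp x (v j); set Y := dotp y (v j); set W := dotp _ (v j) => hX hY hW hd.
have hXY : `|X - Y| <= (z j - X) + (z j - Y) by rewrite ler_norml; apply/andP; split; lra.
have htW : t * W + t <= t * C0 by have := ler_norm W; nra.
have htXY : 4 * (t * C0) <= `|X - Y|.
  by rewrite -(ler_pM2r (lt_le_trans ltr01 C0_ge1)); nra.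
lra.
Qed.

End InscribedBall.

Theorem lemma3p4 (R : realType) (n N : nat) (v : 'I_N -> 'I_n -> R)
  (P : nat -> set ('I_n -> R)) :
  (2 <= n)%N ->
  (forall j, is_unit_vec (v j)) ->
  not_in_closed_hemisphere v ->
  general_position v ->
  (forall i, in_Pclass v (P i)) ->
  ~ (exists M : R, forall i, outer_radius (P i) <= M) ->
  ~ (exists M : R, forall i, inner_radius (P i) <= M).
Proof.
move=> le2n v_unit hemi gp hP outer_unbounded [M inner_le]; apply: outer_unbounded.
have le_nN := not_in_closed_hemisphere_dim hemi.
have j0 : 'I_N := Ordinal (leq_trans le2n le_nN).
have [C C_gt0 inscribed] := polyset_inscribed_ball v_unit gp le_nN.
have CM_ge0 : 0 <= C * `|M| by rewrite mulr_ge0 // ltW.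
exists (n%:R * (C * `|M|)) => i.
move: (inner_le i); have [z [-> [c0 [r0 [r0_gt0 c0_ball]]]]] := hP i => inner_le_i.
have [[c' [r' bounded]] | unbounded] :=
  pselect (exists c r, polyset v z `<=` cball c r); last first.
  rewrite outer_radius_unbounded; first exact: mulr_ge0.
  by move=> c r sub; apply: unbounded; exists c, r.
apply: outer_radius_le; first exact: mulr_ge0.
apply: sub_cball_of_coord => // x k hx.
have c0_in : polyset v z c0.
  apply: c0_ball; rewrite /cball /sqnorm /dotp /= big1 ?sqr_ge0 // => i' _.
  by rewrite subrr mulr0.
have [c hc] := inscribed z x c0 k hx c0_in.
have := le_inner_radius (v_unit j0) bounded (divr_ge0 (normr_ge0 _) (ltW C_gt0)) hc.
move/le_trans/(_ inner_le_i); rewrite ler_pdivrMr // => h.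
by apply: le_trans h _; rewrite mulrC ler_pM2l // real_ler_norm ?num_real.
Qed.
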